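(* Let $C$ be a nondegenerate correlator on the smooth real vector bundle $E\to M$. Then $C$ induces a canonical metric $(\cdot,\cdot)_C$ on $E$ and a connection $\nabla^C$ on $E$ compatible with this metric, described as follows: if $\mathcal O\subset M$ is a coordinate neighborhood with coordinates $(x^i)$ and $\underline e:\underline{\mathbb R}^r_{\mathcal O}\to E|_{\mathcal O}$ is a $(\cdot,\cdot)_C$-orthonormal frame, then in this frame $\nabla^C=d+\sum_i\Gamma_i(\underline e)dx^i$, where the skew-symmetric $r\times r$ matrices are $\Gamma_i(\underline e)_y=-\partial_{x^i}T(\underline e)_{x,y}|_{x=y}$. This is well defined: for any smooth $g:\mathcal O\to O(r)$ one has $\Gamma(\underline e\cdot g)=g^{-1}dg+g^{-1}\Gamma(\underline e)g$, where $\Gamma(\underline e)=\sum_i\Gamma_i(\underline e)dx^i$, so the connections defined via different orthonormal frames coincide.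
   Context: A correlator on $E$ is a smooth section $C$ of $E\boxtimes E$ over $M\times M$, identified with bilinear maps $C_{x,y}:E_x^*\times E_y^*\to\mathbb R$, which is symmetric ($C_{x,y}(u^*,v^* )=C_{y,x}(v^*,u^* )$) with each $C_{x,x}$ nonnegative definite; nondegenerate means each $C_{x,x}$ is positive definite. The metric $(\cdot,\cdot)_C$ on $E$ is the dual of the inner product $C_{x,x}$ on $E_x^*$. The tunneling map $T_{x,y}\in\mathrm{Hom}(E_y,E_x)$ is defined by $\langle u^*,T_{x,y}v\rangle=C_{x,y}(u^*,v^\flat)$, $v^\flat$ the $(\cdot,\cdot)_C$-dual of $v$. For an orthonormal frame $\underline e$, $T(\underline e)_{x,y}:=\underline e(x)^{-1}T_{x,y}\underline e(y)\in\mathrm{End}(\mathbb R^r)$. The expression $d+\Gamma$ acts on $\mathbb R^r$-valued functions (coordinates of sections in the frame) by $s\mapsto ds+\Gamma s$. *)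

(* Local (coordinate-chart) formalization. *)
From HB Require Import structures.
From mathcomp Require Import all_boot all_order all_algebra.
From mathcomp Require Import all_classical all_reals all_analysis.
Set Implicit Arguments. Unset Strict Implicit. Unset Printing Implicit Defensive.
Import Order.TTheory GRing.Theory Num.Theory.
Import numFieldNormedType.Exports.
Local Open Scope classical_set_scope.
Local Open Scope ring_scope.

Section Smooth.
Variable R : realType.

Fixpoint Ck_on (V W : normedModType R) (k : nat) (O : set V) (f : V -> W)
  : Prop :=
  match k with
  | 0 => forall x, O x -> {for x, continuous f}
  | k'.+1 => (forall x, O x -> {for x, continuous f}) /\
             (forall x v, O x -> derivable f x v) /\
             (forall v, Ck_on k' O (fun x => 'D_v f x))
  end.

Definition smooth_on (V W : normedModType R) (O : set V) (f : V -> W) :=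
  forall k, Ck_on k O f.

Variables (n r : nat).

Definition coord_dir (i : 'I_n) : 'rV[R]_n := delta_mx 0 i.

(* The correlator C is given, in a fixed smooth local trivialization of E
   over the chart O, by K x y : 'M_r, with C_{x,y}(a,b) = a^T (K x y) b
   (covectors written as column vectors of their coordinates in the dual
   frame). *)

Definition posdef (A : 'M[R]_r) :=
  forall u : 'cV[R]_r, u != 0 -> 0 < ((u^T *m A *m u) ord0 ord0).

(* Gram matrix of the metric (.,.)_C on E_x : dual of the inner product
   C_{x,x} on E_x^*. *)
Definition corr_metric (K : 'rV[R]_n -> 'rV[R]_n -> 'M[R]_r) x : 'M[R]_r :=
  invmx (K x x).

Definition flat (K : 'rV[R]_n -> 'rV[R]_n -> 'M[R]_r) y (v : 'cV[R]_r)
  : 'cV[R]_r := corr_metric K y *m v.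

(* Tunneling map T_{x,y} : E_y -> E_x, <a, T v> = C_{x,y}(a, v^flat) *)
Definition tunneling (K : 'rV[R]_n -> 'rV[R]_n -> 'M[R]_r) x y : 'M[R]_r :=
  K x y *m corr_metric K y.

(* A frame e : column j of e x is the j-th frame vector at x *)
Definition orthonormal_frame (K : 'rV[R]_n -> 'rV[R]_n -> 'M[R]_r)
  (O : set 'rV[R]_n) (e : 'rV[R]_n -> 'M[R]_r) :=
  forall x, O x -> e x \in unitmx /\ (e x)^T *m corr_metric K x *m e x = 1%:M.

Definition tunneling_frame (K : 'rV[R]_n -> 'rV[R]_n -> 'M[R]_r)
  (e : 'rV[R]_n -> 'M[R]_r) x y : 'M[R]_r :=
  invmx (e x) *m tunneling K x y *m e y.

Definition Gamma (K : 'rV[R]_n -> 'rV[R]_n -> 'M[R]_r)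
  (e : 'rV[R]_n -> 'M[R]_r) (i : 'I_n) y : 'M[R]_r :=
  - 'D_(coord_dir i) (fun x => tunneling_frame K e x y) y.

(* (d + Gamma) applied in direction x^i to a section with coordinates s
   in the frame e *)
Definition covD (K : 'rV[R]_n -> 'rV[R]_n -> 'M[R]_r)
  (e : 'rV[R]_n -> 'M[R]_r) (i : 'I_n) (s : 'rV[R]_n -> 'cV[R]_r) y
  : 'cV[R]_r :=
  'D_(coord_dir i) s y + Gamma K e i y *m s y.

End Smooth.
Arguments coord_dir {R n} i.

From HB Require Import structures.
From mathcomp Require Import all_boot all_order all_algebra.
From mathcomp Require Import all_classical all_reals all_analysis.
From mathcomp Require Import lra.
Set Implicit Arguments. Unset Strict Implicit. Unset Printing Implicit Defensive.
Import Order.TTheory GRing.Theory Num.Theory.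
Import numFieldNormedType.Exports.
Local Open Scope classical_set_scope.
Local Open Scope ring_scope.

(* In an orthonormal frame the correlator satisfies [K y y = e y *m (e y)^T],
   so [T(e)_{x,y} = e(x)^-1 K(x,y) e(y)^-T], and differentiating at [x = y]
   gives [Gamma = e^-1 de - e^-1 (d_1 K) e^-T], where [d_1] differentiates in
   the first variable only.  As [K(y,x) = K(x,y)^T], the derivative of [K(x,x)]
   along the diagonal is [d_1 K + (d_1 K)^T]; it is also [d(e e^T)], and
   comparing the two gives [Gamma + Gamma^T = 0].  Metric compatibility is the
   Leibniz rule plus skew-symmetry, and the gauge law comes from differentiating
   [T(e g)_{x,y} = g(x)^T T(e)_{x,y} g(y)] at [x = y] using [g^T g = 1].  The
   only analytic input beyond the product rule is the chain rule along the
   diagonal, which uses the C^1 hypothesis through the mean value theorem. *)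

Lemma mulmx1_invmx (R : comUnitRingType) k (A B : 'M[R]_k) :
  A *m B = 1%:M -> invmx B = A.
Proof.
move=> AB; have [_ uB] := mulmx1_unit AB.
by rewrite -[invmx B]mul1mx -AB mulmxK.
Qed.

Lemma derive_mx_entry (R : realType) (V : normedModType R) m n
    (A : V -> 'M[R]_(m, n)) y v i j :
  derivable A y v -> 'D_v (fun x => A x i j) y = 'D_v A y i j.
Proof. by move=> dA; rewrite (derive_mx dA) mxE. Qed.

Section MatrixDerive.
Variables (R : realType) (V : normedModType R).

Lemma mulmx_funE m n p (A : V -> 'M[R]_(m, n)) (B : V -> 'M[R]_(n, p)) i j :
  (fun x => (A x *m B x) i j) =
  \sum_(k < n) ((fun x => A x i k) * (fun x => B x k j)).
Proof. by rewrite fct_sumE; apply/funext => x; rewrite mxE. Qed.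

Lemma derivable_mulmx m n p (A : V -> 'M[R]_(m, n)) (B : V -> 'M[R]_(n, p)) y v :
  derivable A y v -> derivable B y v -> derivable (fun x => A x *m B x) y v.
Proof.
move=> /derivable_mxP dA /derivable_mxP dB; apply/derivable_mxP => i j.
by rewrite mulmx_funE; apply: derivable_sum => k; apply: derivableM.
Qed.

Lemma derive_mulmx m n p (A : V -> 'M[R]_(m, n)) (B : V -> 'M[R]_(n, p)) y v :
  derivable A y v -> derivable B y v ->
  'D_v (fun x => A x *m B x) y = 'D_v A y *m B y + A y *m 'D_v B y.
Proof.
move=> dA dB; have /derivable_mxP dA' := dA; have /derivable_mxP dB' := dB.
rewrite (derive_mx (derivable_mulmx dA dB)); apply/matrixP => i j.
rewrite !mxE mulmx_funE derive_sum; last by move=> k; apply: derivableM.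
rewrite (derive_mx dA) (derive_mx dB) -big_split /=.
apply: eq_bigr => k _; rewrite deriveM // !mxE /= addrC.
by rewrite /GRing.scale /= [B y k j * _]mulrC.
Qed.

Lemma derivable_trmx m n (A : V -> 'M[R]_(m, n)) y v :
  derivable A y v -> derivable (fun x => (A x)^T) y v.
Proof.
move=> /derivable_mxP dA; apply/derivable_mxP => i j.
by under eq_fun do rewrite mxE; apply: dA.
Qed.

Lemma derive_trmx m n (A : V -> 'M[R]_(m, n)) y v :
  derivable A y v -> 'D_v (fun x => (A x)^T) y = ('D_v A y)^T.
Proof.
move=> dA; rewrite (derive_mx (derivable_trmx dA)) (derive_mx dA).
by apply/matrixP => i j; rewrite !mxE; under eq_fun do rewrite mxE.
Qed.

Lemma derivable_det n (A : V -> 'M[R]_n) y v :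
  derivable A y v -> derivable (fun x => \det (A x)) y v.
Proof.
move=> /derivable_mxP dA; rewrite /determinant -fct_sumE.
apply: (big_ind (fun f => derivable f y v)) => [|f g|s _].
- exact: (derivable_cst (0 : R)).
- exact: derivableD.
apply: derivableM; first exact: derivable_cst.
rewrite -fct_prodE; apply: (big_ind (fun f => derivable f y v)) => [|f g|i _].
- exact: (derivable_cst (1 : R)).
- exact: derivableM.
- exact: dA.
Qed.

Lemma derivable_invmx n (A : V -> 'M[R]_n) y v :
  derivable A y v -> (\forall x \near y, A x \in unitmx) ->
  derivable (fun x => invmx (A x)) y v.
Proof.
move=> dA unitA; have /derivable_mxP dA' := dA.
apply: (@near_eq_derivable _ _ _ (fun x => (\det (A x))^-1 *: \adj (A x))).
  by near=> x; rewrite /invmx (near unitA x).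
apply/derivable_mxP => i j.
under eq_fun do rewrite !mxE.
apply: derivableM; first apply: derivableV.
- by rewrite -unitfE -unitmxE; exact: nbhs_singleton unitA.
- exact: derivable_det.
apply: derivableM; first exact: derivable_cst.
apply: derivable_det; apply/derivable_mxP => k l.
by under eq_fun do rewrite !mxE; apply: dA'.
Unshelve. all: by end_near.
Qed.

Lemma derive_invmx n (A : V -> 'M[R]_n) y v :
  derivable A y v -> (\forall x \near y, A x \in unitmx) ->
  'D_v (fun x => invmx (A x)) y = - (invmx (A y) *m 'D_v A y *m invmx (A y)).
Proof.
move=> dA unitA; have uAy : A y \in unitmx by exact: nbhs_singleton unitA.
have dinvA := derivable_invmx dA unitA.
have : 'D_v (fun x => invmx (A x) *m A x) y = 0.
  rewrite (@near_eq_derive _ _ _ _ (cst 1%:M)) ?derive_cst //.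
  by near=> x; rewrite mulVmx // (near unitA x).
rewrite derive_mulmx // => /eqP; rewrite addr_eq0 => /eqP E.
by rewrite -[LHS](mulmxK uAy) E mulNmx.
Unshelve. all: by end_near.
Qed.

Lemma derive_orthogonal_mx n (g : V -> 'M[R]_n) y v :
  derivable g y v -> (\forall x \near y, (g x)^T *m g x = 1%:M) ->
  ('D_v g y)^T *m g y = - ((g y)^T *m 'D_v g y).
Proof.
move=> dg orth_g.
have : 'D_v (fun x => (g x)^T *m g x) y = 0.
  by rewrite (@near_eq_derive _ _ _ _ (cst 1%:M)) ?derive_cst.
rewrite (derive_mulmx (derivable_trmx dg) dg) (derive_trmx dg) => /eqP.
by rewrite addr_eq0 => /eqP.
Qed.

End MatrixDerive.

Section DirectionalDerive.
Variables (R : numFieldType) (U V W : normedModType R).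

Lemma diff_quotient_line_eq (F : U -> W) (G : V -> W) p w a v :
  (forall h : R, F (h *: w + p) = G (h *: v + a)) ->
  (fun h : R => h^-1 *: ((F \o shift p) (h *: w) - F p)) =
  (fun h : R => h^-1 *: ((G \o shift a) (h *: v) - G a)).
Proof.
move=> FG; have := FG 0; rewrite !scale0r !add0r => FGp.
by apply/funext => h /=; rewrite FG FGp.
Qed.

Lemma derivable_along_line (F : U -> W) (G : V -> W) p w a v :
  (forall h : R, F (h *: w + p) = G (h *: v + a)) ->
  derivable F p w -> derivable G a v.
Proof. by move=> /diff_quotient_line_eq E; rewrite /derivable E. Qed.

Lemma derive_along_line (F : U -> W) (G : V -> W) p w a v :
  (forall h : R, F (h *: w + p) = G (h *: v + a)) ->
  'D_w F p = 'D_v G a.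
Proof. by move=> /diff_quotient_line_eq E; rewrite /derive E. Qed.

End DirectionalDerive.

Section DirectionalDeriveAdditive.
Variables (R : realType) (U : normedModType R).

Lemma MVT_along (G : U -> R) z w (h : R) :
  (forall s, `|s| <= `|h| -> derivable G (s *: w + z) w) ->
  exists2 c, `|c| <= `|h| & G (h *: w + z) - G z = 'D_w G (c *: w + z) * h.
Proof.
move=> dG; pose phi t := G (t *: w + z).
have line s t : G (t *: w + (s *: w + z)) = phi (t *: 1 + s).
  by rewrite /phi addrA -scalerDl [t *: 1]mulr1.
have dphi (s : R) : `|s| <= `|h| -> derivable phi s 1.
  by move=> /dG; apply: derivable_along_line (line s).
have Dphi (s : R) : `|s| <= `|h| -> is_derive s 1 phi ('D_w G (s *: w + z)).
  by move=> hs; apply: DeriveDef; [exact: dphi | rewrite (derive_along_line (line s))].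
have phi0 : phi 0 = G z by rewrite /phi scale0r add0r.
have MVT_between lo hi : lo <= hi -> (forall x, lo <= x <= hi -> `|x| <= `|h|) ->
    exists2 c, lo <= c <= hi & phi hi - phi lo = 'D_w G (c *: w + z) * (hi - lo).
  move=> lohi small.
  have [||c] := @MVT_segment R phi (fun t => 'D_w G (t *: w + z)) lo hi lohi.
  - by move=> x /[!in_itv] /= /andP[? ?]; apply/Dphi/small; apply/andP; split; exact: ltW.
  - by apply: derivable_within_continuous => x /[!in_itv] /= /small /dphi.
  by move=> /[!in_itv] /= ? ?; exists c.
case: (ltgtP h 0) => [hlt|hgt|->]; last first.
- by exists 0; rewrite ?normr0 // scale0r add0r subrr mulr0.
- have [|c /andP[? ?] Ec] := MVT_between 0 h (ltW hgt).
    by move=> x /andP[? ?]; rewrite ler_norml (gtr0_norm hgt); apply/andP; split; lra.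
  exists c; first by rewrite ler_norml (gtr0_norm hgt); apply/andP; split; lra.
  by rewrite -phi0 Ec subr0.
- have [|c /andP[? ?] Ec] := MVT_between h 0 (ltW hlt).
    by move=> x /andP[? ?]; rewrite ler_norml (ltr0_norm hlt); apply/andP; split; lra.
  exists c; first by rewrite ler_norml (ltr0_norm hlt); apply/andP; split; lra.
  by rewrite -phi0 -opprB Ec sub0r mulrN opprK.
Qed.

(* By the mean value theorem along [w], the quotient is ['D_w G] at a point
   within [|h| (|u| + |w|)] of [a]; continuity of ['D_w G] at [a] concludes. *)
Lemma cvg_diff_quotient_moving (G : U -> R) a u w :
  (\forall z \near a, derivable G z w) -> {for a, continuous ('D_w G)} ->
  (fun h : R => h^-1 *: (G (h *: w + (h *: u + a)) - G (h *: u + a))) @ 0^'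
    --> 'D_w G a.
Proof.
move=> dGnear cDG; apply/cvgrPdist_lt => e e0.
have : \forall z \near a, derivable G z w /\ `|'D_w G a - 'D_w G z| < e.
  have close : \forall z \near a, `|'D_w G a - 'D_w G z| < e.
    by move/cvgrPdist_lt: cDG; apply.
  by near=> z; split; [exact: (near dGnear z)|exact: (near close z)].
move=> /nbhs_ballP [d d0 near_a].
pose M := `|u| + `|w| + 1.
have M0 : 0 < M by rewrite /M ltr_pwDr // addr_ge0.
near=> h.
have hn0 : h != 0 by near: h; exact: nbhs_dnbhs_neq.
have hb : `|h| < d / M by near: h; apply: dnbhs0_lt; exact: divr_gt0.
have inball s : `|s| <= `|h| ->
    derivable G (s *: w + (h *: u + a)) w /\
    `|'D_w G a - 'D_w G (s *: w + (h *: u + a))| < e.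
  move=> hs; apply: near_a; rewrite -ball_normE /ball_ /=.
  have -> : a - (s *: w + (h *: u + a)) = - (s *: w + h *: u).
    by rewrite addrA opprD addrCA subrr addr0.
  rewrite normrN (le_lt_trans (ler_normD _ _)) // !normrZ.
  have hM : `|h| * M < d by rewrite -ltr_pdivlMr.
  apply: le_lt_trans hM; rewrite /M.
  have := normr_ge0 w; have := normr_ge0 u; have := normr_ge0 h; nra.
have [c hc ->] := MVT_along (fun s hs => (inball s hs).1).
rewrite /GRing.scale /= mulrC -mulrA mulfV // mulr1.
exact: (inball c hc).2.
Unshelve. all: by end_near.
Qed.

Lemma is_derive_dirD (G : U -> R) a u w :
  (\forall z \near a, derivable G z w) -> {for a, continuous ('D_w G)} ->
  derivable G a u -> is_derive a (u + w) G ('D_u G a + 'D_w G a).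
Proof.
move=> dGnear cDG dGu.
suff lim_uw : (fun h : R => h^-1 *: ((G \o shift a) (h *: (u + w)) - G a)) @ 0^'
    --> 'D_u G a + 'D_w G a.
  by apply: DeriveDef; [apply/cvg_ex; eexists; exact: lim_uw | exact: cvg_lim lim_uw].
have -> : (fun h : R => h^-1 *: ((G \o shift a) (h *: (u + w)) - G a)) =
    (fun h : R => h^-1 *: ((G \o shift a) (h *: u) - G a)) +
    (fun h : R => h^-1 *: (G (h *: w + (h *: u + a)) - G (h *: u + a))).
  apply/funext => h /=; rewrite addrfctE -scalerDr; congr (_ *: _).
  rewrite scalerDr -addrA addrCA; lra.
by apply: cvgD; [exact: dGu | exact: cvg_diff_quotient_moving].
Qed.

End DirectionalDeriveAdditive.

Section DiagonalDerive.
Variables (R : realType) (V : normedModType R).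

(* [(v, v) = (v, 0) + (0, v)], and a directional derivative is additive in
   the direction as soon as one of the two summands has a continuous one. *)
Lemma derive_diag_mx m n (F : V * V -> 'M[R]_(m, n)) (a v : V) :
  (\forall z \near (a, a), derivable F z (0, v)) ->
  {for (a, a), continuous ('D_(0, v) F)} -> derivable F (a, a) (v, 0) ->
  'D_v (fun x => F (x, x)) a =
  'D_v (fun x => F (x, a)) a + 'D_v (fun x => F (a, x)) a.
Proof.
move=> dF2 cDF2 dF1.
have along_diag h : F (h *: (v, v) + (a, a)) = F (h *: v + a, h *: v + a) by [].
have along_fst h : F (h *: (v, 0) + (a, a)) = F (h *: v + a, a).
  by congr F; apply/pair_equal_spec; split => //=; rewrite scaler0 add0r.
have along_snd h : F (h *: (0, v) + (a, a)) = F (a, h *: v + a).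
  by congr F; apply/pair_equal_spec; split => //=; rewrite scaler0 add0r.
rewrite -(derive_along_line along_diag) -(derive_along_line along_fst).
rewrite -(derive_along_line along_snd).
have vv : (v, v) = (v, 0) + (0, v) :> V * V.
  by apply/pair_equal_spec; split => /=; rewrite ?addr0 ?add0r.
have entry i j : is_derive (a, a) (v, v) (fun z => F z i j)
    ('D_(v, 0) (fun z => F z i j) (a, a) + 'D_(0, v) (fun z => F z i j) (a, a)).
  rewrite vv; apply: is_derive_dirD.
  - by apply: filterS dF2 => z /derivable_mxP; apply.
  - have cDF2ij : {for (a, a), continuous (fun z => 'D_(0, v) F z i j)}.
      by apply: (@continuous_comp _ _ _ ('D_(0, v) F) (fun M => M i j));
        [exact: cDF2 | exact: coord_continuous].
    have entryE : \forall z \near (a, a),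
        'D_(0, v) F z i j = 'D_(0, v) (fun z => F z i j) z.
      by apply: filterS dF2 => z dFz; rewrite derive_mx_entry.
    rewrite /prop_for /continuous_at -(nbhs_singleton entryE).
    by apply: cvg_trans cDF2ij; apply: near_eq_cvg.
  - by move/derivable_mxP: dF1; apply.
have dFvv : derivable F (a, a) (v, v).
  by apply/derivable_mxP => i j; case: (entry i j).
have dF2a : derivable F (a, a) (0, v) := nbhs_singleton dF2.
apply/matrixP => i j; have [_ Dij] := entry i j.
rewrite (derive_mx_entry i j dFvv) (derive_mx_entry i j dF1) in Dij.
by rewrite [RHS]mxE Dij (derive_mx_entry i j dF2a).
Qed.

End DiagonalDerive.

Section OrthonormalFrame.
Variables (R : realType) (n r : nat) (O : set 'rV[R]_n)
  (K : 'rV[R]_n -> 'rV[R]_n -> 'M[R]_r) (e : 'rV[R]_n -> 'M[R]_r).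
Hypothesis K_sym : forall x y, O x -> O y -> (K x y)^T = K y x.
Hypothesis e_orthonormal : orthonormal_frame K O e.

Lemma frame_unit x : O x -> e x \in unitmx.
Proof. by move=> /e_orthonormal[]. Qed.

Lemma invmx_frame x : O x -> invmx (e x) = (e x)^T *m invmx (K x x).
Proof. by move=> /e_orthonormal[_ /mulmx1_invmx]. Qed.

Lemma correlator_diag_frame x : O x -> K x x = e x *m (e x)^T.
Proof.
move=> Ox; have ee1 : e x *m (e x)^T *m invmx (K x x) = 1%:M.
  by rewrite -mulmxA -invmx_frame // mulmxV // frame_unit.
by rewrite -[LHS]invmxK (mulmx1_invmx ee1).
Qed.

Lemma trmx_invmx_frame x : O x -> (invmx (e x))^T = invmx (K x x) *m e x.
Proof. by move=> Ox; rewrite invmx_frame // trmx_mul trmxK trmx_inv K_sym. Qed.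

Lemma tunneling_frameE x y : O y ->
  tunneling_frame K e x y = invmx (e x) *m K x y *m (invmx (e y))^T.
Proof.
by move=> Oy; rewrite /tunneling_frame /tunneling /corr_metric -!mulmxA trmx_invmx_frame.
Qed.

Lemma tunneling_frame_diag y : O y -> tunneling_frame K e y y = 1%:M.
Proof.
move=> Oy; have uK : K y y \in unitmx.
  by rewrite correlator_diag_frame // unitmx_mul unitmx_tr frame_unit.
by rewrite /tunneling_frame /tunneling /corr_metric mulmxV // mulmx1 mulVmx // frame_unit.
Qed.

Lemma tunneling_frame_mulmx (g : 'rV[R]_n -> 'M[R]_r) x y :
  O x -> (g x)^T *m g x = 1%:M ->
  tunneling_frame K (fun x => e x *m g x) x y =
  (g x)^T *m tunneling_frame K e x y *m g y.
Proof.
move=> Ox orth_gx; rewrite /tunneling_frame.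
have -> : invmx (e x *m g x) = (g x)^T *m invmx (e x).
  apply: mulmx1_invmx.
  by rewrite -mulmxA (mulmxA (invmx (e x))) mulVmx ?frame_unit // mul1mx.
by rewrite !mulmxA.
Qed.

End OrthonormalFrame.

Section CorrelatorConnection.
Variables (R : realType) (n r : nat) (O : set 'rV[R]_n)
  (K : 'rV[R]_n -> 'rV[R]_n -> 'M[R]_r) (e : 'rV[R]_n -> 'M[R]_r).
Hypothesis O_open : open O.
Hypothesis K_smooth :
  smooth_on (O `*` O) (fun p : 'rV[R]_n * 'rV[R]_n => K p.1 p.2).
Hypothesis K_sym : forall x y, O x -> O y -> (K x y)^T = K y x.
Hypothesis e_smooth : smooth_on O e.
Hypothesis e_orthonormal : orthonormal_frame K O e.

Let K2 (p : 'rV[R]_n * 'rV[R]_n) := K p.1 p.2.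

Let near_O y : O y -> \forall x \near y, O x.
Proof. by move=> Oy; apply: open_nbhs_nbhs. Qed.

Let near_OO y : O y -> \forall p \near (y, y), (O `*` O) p.
Proof. by move=> Oy; exists (O, O) => //=; split; apply: near_O. Qed.

Let derivable_K2 p w : (O `*` O) p -> derivable K2 p w.
Proof. by have [_ [dK _]] := K_smooth 1%N; apply: dK. Qed.

Let derivable_e y v : O y -> derivable e y v.
Proof. by have [_ [de _]] := e_smooth 1%N; apply: de. Qed.

Let near_frame_unit y : O y -> \forall x \near y, e x \in unitmx.
Proof. by move=> /near_O; apply: filterS => x /(frame_unit e_orthonormal). Qed.

Lemma derivable_correlator_fst y v : O y -> derivable (fun x => K x y) y v.
Proof.
move=> Oy; apply: (derivable_along_line (F := K2) (p := (y, y)) (w := (v, 0))).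
  by move=> h; congr K; rewrite /= scaler0 add0r.
exact: derivable_K2.
Qed.

Lemma derive_correlator_diag y v : O y ->
  'D_v (fun x => K x x) y =
  'D_v (fun x => K x y) y + ('D_v (fun x => K x y) y)^T.
Proof.
move=> Oy.
have -> : 'D_v (fun x => K x x) y =
    'D_v (fun x => K x y) y + 'D_v (fun x => K y x) y.
  apply: (derive_diag_mx (F := K2)).
  - by apply: filterS (near_OO Oy) => p /derivable_K2.
  - by have [_ [_ /(_ (0, v)) [cD _]]] := K_smooth 2%N; apply: cD.
  - exact: derivable_K2.
rewrite -(derive_trmx (derivable_correlator_fst (v := v) Oy)); congr (_ + _).
by apply: near_eq_derive; apply: filterS (near_O Oy) => x Ox; rewrite K_sym.
Qed.

Lemma derive_correlator_diag_frame y v : O y ->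
  'D_v (fun x => K x x) y = 'D_v e y *m (e y)^T + e y *m ('D_v e y)^T.
Proof.
move=> Oy; have de := derivable_e (v := v) Oy.
rewrite (@near_eq_derive _ _ _ _ (fun x => e x *m (e x)^T)); last first.
  by apply: filterS (near_O Oy) => x Ox; rewrite (correlator_diag_frame e_orthonormal Ox).
by rewrite (derive_mulmx de (derivable_trmx de)) (derive_trmx de).
Qed.

Lemma is_derive_tunneling_frame y v : O y ->
  is_derive y v (fun x => tunneling_frame K e x y)
    (invmx (e y) *m 'D_v (fun x => K x y) y *m (invmx (e y))^T
     - invmx (e y) *m 'D_v e y).
Proof.
move=> Oy; set P := invmx (e y).
have de := derivable_e (v := v) Oy; have dK := derivable_correlator_fst (v := v) Oy.
have dinv_e := derivable_invmx de (near_frame_unit Oy).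
have T_eq : (fun x => tunneling_frame K e x y) =
    (fun x => invmx (e x) *m K x y *m P^T).
  by apply/funext => x; rewrite (tunneling_frameE K_sym e_orthonormal x Oy).
have dinv_eK := derivable_mulmx dinv_e dK.
rewrite T_eq; apply: DeriveDef; first exact: derivable_mulmx dinv_eK (derivable_cst P^T y v).
rewrite (derive_mulmx dinv_eK (derivable_cst P^T y v)).
rewrite derive_cst mulmx0 addr0 (derive_mulmx dinv_e dK).
rewrite (derive_invmx de (near_frame_unit Oy)) -/P mulmxDl addrC !mulNmx.
have ue := frame_unit e_orthonormal Oy.
rewrite (correlator_diag_frame e_orthonormal Oy) -!mulmxA mulKmx //.
by rewrite -trmx_mul mulVmx // trmx1 mulmx1.
Qed.

Lemma GammaE i y : O y ->
  Gamma K e i y = invmx (e y) *m 'D_(coord_dir i) e y -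
    invmx (e y) *m 'D_(coord_dir i) (fun x => K x y) y *m (invmx (e y))^T.
Proof.
move=> Oy; rewrite /Gamma; have [_ ->] := is_derive_tunneling_frame (coord_dir i) Oy.
by rewrite opprB.
Qed.

Lemma Gamma_skew i y : O y -> (Gamma K e i y)^T = - Gamma K e i y.
Proof.
move=> Oy; rewrite GammaE //.
set v := coord_dir i; set P := invmx (e y); set de := 'D_v e y.
set dK := 'D_v (fun x => K x y) y.
have Pe : P *m e y = 1%:M by rewrite mulVmx ?(frame_unit e_orthonormal).
have sym_part : P *m (dK + dK^T) *m P^T = P *m de + de^T *m P^T.
  rewrite -derive_correlator_diag // derive_correlator_diag_frame //.
  rewrite -/de mulmxDr mulmxDl !mulmxA Pe mul1mx -(mulmxA _ (e y)^T).
  by rewrite -trmx_mul Pe trmx1 mulmx1.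
rewrite mulmxDr mulmxDl in sym_part.
rewrite raddfB /= !trmx_mul !trmxK mulmxA opprB.
by apply/eqP; rewrite subr_eq eq_sym addrAC subr_eq sym_part addrC.
Qed.

Lemma covD_compatible s t i y : smooth_on O s -> smooth_on O t -> O y ->
  'D_(coord_dir i) (fun x => (s x)^T *m t x) y =
  (covD K e i s y)^T *m t y + (s y)^T *m covD K e i t y.
Proof.
move=> s_smooth t_smooth Oy.
have ds : derivable s y (coord_dir i) by have [_ [ds _]] := s_smooth 1%N; apply: ds.
have dt : derivable t y (coord_dir i) by have [_ [dt _]] := t_smooth 1%N; apply: dt.
rewrite (derive_mulmx (derivable_trmx ds) dt) (derive_trmx ds) /covD raddfD /=.
rewrite trmx_mul Gamma_skew // mulmxDl mulmxDr mulmxN mulNmx !mulmxA.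
by rewrite addrACA addNr addr0.
Qed.

Lemma Gamma_gauge (g : 'rV[R]_n -> 'M[R]_r) i y :
  smooth_on O g -> (forall x, O x -> (g x)^T *m g x = 1%:M) -> O y ->
  Gamma K (fun x => e x *m g x) i y =
  invmx (g y) *m 'D_(coord_dir i) g y + invmx (g y) *m Gamma K e i y *m g y.
Proof.
move=> g_smooth g_orth Oy; set v := coord_dir i.
have dg : derivable g y v by have [_ [dg _]] := g_smooth 1%N; apply: dg.
have [dT _] := is_derive_tunneling_frame v Oy.
have near_orth : \forall x \near y, (g x)^T *m g x = 1%:M.
  by apply: filterS (near_O Oy) => x /g_orth.
have invg : invmx (g y) = (g y)^T by apply: mulmx1_invmx; exact: g_orth.
rewrite /Gamma (@near_eq_derive _ _ _ _
  (fun x => (g x)^T *m tunneling_frame K e x y *m g y)); last first.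
  apply: filterS (near_O Oy) => x Ox.
  by rewrite (tunneling_frame_mulmx e_orthonormal y Ox (g_orth x Ox)).
have dgT := derivable_trmx dg.
rewrite (derive_mulmx (derivable_mulmx dgT dT) (derivable_cst (g y) y v)).
rewrite derive_cst mulmx0 addr0 (derive_mulmx dgT dT) (derive_trmx dg).
rewrite (tunneling_frame_diag e_orthonormal Oy) mulmx1 mulmxDl derive_orthogonal_mx //.
by rewrite invg opprD opprK mulmxN mulNmx.
Qed.

End CorrelatorConnection.

Theorem proposition2p1 (R : realType) (n r : nat) (O : set 'rV[R]_n)
  (K : 'rV[R]_n -> 'rV[R]_n -> 'M[R]_r) (e : 'rV[R]_n -> 'M[R]_r) :
  open O ->
  smooth_on (O `*` O) (fun p : 'rV[R]_n * 'rV[R]_n => K p.1 p.2) ->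
  (forall x y, O x -> O y -> (K x y)^T = K y x) ->
  (forall x, O x -> posdef (K x x)) ->
  smooth_on O e ->
  orthonormal_frame K O e ->
  (forall (i : 'I_n) y, O y -> (Gamma K e i y)^T = - Gamma K e i y) /\
  (forall s t : 'rV[R]_n -> 'cV[R]_r, smooth_on O s -> smooth_on O t ->
     forall (i : 'I_n) y, O y ->
       'D_(coord_dir i) (fun x => (s x)^T *m t x) y =
       (covD K e i s y)^T *m t y + (s y)^T *m covD K e i t y) /\
  (forall g : 'rV[R]_n -> 'M[R]_r, smooth_on O g ->
     (forall x, O x -> (g x)^T *m g x = 1%:M) ->
     forall (i : 'I_n) y, O y ->
       Gamma K (fun x => e x *m g x) i y =
       invmx (g y) *m 'D_(coord_dir i) g y + invmx (g y) *m Gamma K e i y *m g y).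
Proof.
move=> O_open K_smooth K_sym _ e_smooth e_orthonormal.
split; [|split].
- by move=> i y; apply: Gamma_skew.
- by move=> s t s_smooth t_smooth i y; apply: covD_compatible.
- by move=> g g_smooth g_orth i y; apply: Gamma_gauge.
Qed.
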